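(* Let $\mathcal{V}$ be a finite set of nodes, $\mathcal{F}$ a finite set of flows, each flow $f$ with rate $\lambda_f>0$ and path node set $\mathcal{V}_f\subseteq\mathcal{V}$, each node $v$ with capacity $c_v>0$, and assume $\max_f\lambda_f\le\min_v c_v$. Fix $\mathcal{U}\subseteq\mathcal{V}$ and let $OPT(Q2,\mathcal{U})$ be the optimal value of the relaxed allocation problem Q2 for $\mathcal{U}$ (defined in the context). Let $\pi_{\mathrm{GCA}}^{\mathcal{U}}$ be the total rate of flows fully assigned to nodes of $\mathcal{U}$ by the GCA algorithm (defined in the context). Then $\pi_{\mathrm{GCA}}^{\mathcal{U}}\ge\frac13\,OPT(Q2,\mathcal{U})$.
   Context: Problem Q2 for $\mathcal{U}$: maximize $\sum_{f\in\mathcal{F}}\sum_{v\in\mathcal{V}_f\cap\mathcal{U}}\lambda_f^v$ over nonnegative $(\lambda_f^v)$ subject to $\sum_{f}\lambda_f^v\le c_v$ for $v\in\mathcal{U}$, $\lambda_f^v=0$ for $v\notin\mathcal{U}$, and $\sum_{v\in\mathcal{U}}\lambda_f^v\le\lambda_f$ for all $f$. Write $\mathcal{U}_f=\mathcal{V}_f\cap\mathcal{U}$ and $\mathcal{F}_{\mathcal{U}}=\{f:\mathcal{U}_f\ne\emptyset\}$; $c'_v$ denotes the remaining capacity of node $v$ (initially $c_v$). GCA algorithm: sort $\mathcal{F}_{\mathcal{U}}$ in nonincreasing order of rate. Phase I: for each flow $f$ in this order, if some $v\in\mathcal{U}_f$ has $c'_v\ge\lambda_f$, set $\lambda_f^v=\lambda_f$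 for one such $v$ and decrease $c'_v$ by $\lambda_f$. Phase II: for each flow $f$ not yet assigned, in the sorted order, if $\sum_{v\in\mathcal{U}_f}c'_v\ge\lambda_f$, split $f$ and assign it fully to a subset of the nodes of $\mathcal{U}_f$ using their remaining capacities. *)

From HB Require Import structures.
From mathcomp Require Import all_boot all_order all_algebra.
Set Implicit Arguments. Unset Strict Implicit. Unset Printing Implicit Defensive.
Import Order.TTheory GRing.Theory Num.Theory.
Local Open Scope ring_scope.

Section GCA.
Variables (R : realFieldType) (V F : finType).
Variables (lam : F -> R) (c : V -> R) (Vf : F -> {set V}) (U : {set V}).

Definition Uf (f : F) : {set V} := Vf f :&: U.

Definition FU : {set F} := [set f | Uf f != set0].

Definition decr (cap : V -> R) (v : V) (a : R) : V -> R :=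
  fun w => if w == v then cap w - a else cap w.

(* The choice of node (when several qualify) is nondeterministic. *)
Inductive phase1 : seq F -> (V -> R) -> {set F} -> (V -> R) -> {set F} -> Prop :=
| ph1_nil cap A : phase1 [::] cap A cap A
| ph1_assign (f : F) s (v : V) cap (A : {set F}) cap' (A' : {set F}) :
    v \in Uf f -> lam f <= cap v ->
    phase1 s (decr cap v (lam f)) (f |: A) cap' A' ->
    phase1 (f :: s) cap A cap' A'
| ph1_skip (f : F) s cap (A : {set F}) cap' (A' : {set F}) :
    (forall v, v \in Uf f -> cap v < lam f) ->
    phase1 s cap A cap' A' ->
    phase1 (f :: s) cap A cap' A'.

Inductive phase2 : seq F -> (V -> R) -> {set F} -> {set F} -> Prop :=
| ph2_nil cap A : phase2 [::] cap A A
| ph2_done (f : F) s cap (A A' : {set F}) :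
    f \in A -> phase2 s cap A A' -> phase2 (f :: s) cap A A'
| ph2_split (f : F) s (x : V -> R) cap (A A' : {set F}) :
    f \notin A ->
    lam f <= \sum_(v in Uf f) cap v ->
    (forall v, 0 <= x v <= cap v) ->
    (forall v, v \notin Uf f -> x v = 0) ->
    \sum_v x v = lam f ->
    phase2 s (fun w => cap w - x w) (f |: A) A' ->
    phase2 (f :: s) cap A A'
| ph2_fail (f : F) s cap (A A' : {set F}) :
    f \notin A ->
    \sum_(v in Uf f) cap v < lam f ->
    phase2 s cap A A' ->
    phase2 (f :: s) cap A A'.

(* A is the set of flows fully assigned to nodes of U by some execution of
   GCA (any tie-breaking in the sort, any admissible choices). *)
Definition gca_run (A : {set F}) : Prop :=
  exists s : seq F,
    [/\ perm_eq s (enum FU),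
        sorted (fun f g => lam g <= lam f) s &
        exists (cap1 : V -> R) (A1 : {set F}),
          phase1 s c set0 cap1 A1 /\ phase2 s cap1 A1 A].

Definition pi_gca (A : {set F}) : R := \sum_(f in A) lam f.

Definition q2_feasible (x : F -> V -> R) : Prop :=
  [/\ forall f v, 0 <= x f v,
      forall v, v \in U -> \sum_f x f v <= c v,
      forall f v, v \notin U -> x f v = 0 &
      forall f, \sum_(v in U) x f v <= lam f].

Definition q2_obj (x : F -> V -> R) : R :=
  \sum_f \sum_(v in Uf f) x f v.

End GCA.

From HB Require Import structures.
From mathcomp Require Import all_boot all_order all_algebra.
From mathcomp Require Import lra.
Import Order.TTheory GRing.Theory Num.Theory.
Local Open Scope ring_scope.
Set Implicit Arguments. Unset Strict Implicit.

(* A flow skipped in Phase I finds every node [v] of its [U_f] with remaining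
   capacity below [lam f <= c v]; so [v] already carries a flow, of rate at
   least [lam f] since flows are processed by nonincreasing rate, and the used
   capacity of [v] exceeds the remaining one: [v] is at least half full.
   Hence the flows GCA leaves unassigned can receive, in any feasible point of
   Q2, at most the total capacity of half-full nodes, i.e. at most twice the
   rate assigned in Phase I, while the assigned flows contribute at most their
   own total rate. *)

Lemma ler_sum_subpred (R : numDomainType) (T : finType) (P Q : pred T)
    (G : T -> R) :
  (forall i, P i -> Q i) -> (forall i, Q i -> 0 <= G i) ->
  \sum_(i | P i) G i <= \sum_(i | Q i) G i.
Proof.
move=> PQ G0; rewrite [X in _ <= X](bigID P) /=.
rewrite (eq_bigl P); last first.
  by move=> i; case Pi: (P i); rewrite ?andbT ?andbF ?PQ.
by rewrite lerDl; apply: sumr_ge0 => i /andP[/G0].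
Qed.

Section Phase1.
Variables (R : realFieldType) (V F : finType).
Variables (lam : F -> R) (c : V -> R) (Vf : F -> {set V}) (U : {set V}).
Hypothesis lam_gt0 : forall f, 0 < lam f.
Hypothesis lam_le_c : forall f v, lam f <= c v.

Local Notation used cap v := (c v - cap v).

(* Instead of tracking which node each flow went to, it suffices to know that
   a node in use carries at least one assigned flow. *)
Definition phase1_inv (cap : V -> R) (A : {set F}) : Prop :=
  [/\ forall v, cap v <= c v,
      \sum_v used cap v = \sum_(g in A) lam g &
      forall v, 0 < used cap v -> exists2 g, g \in A & lam g <= used cap v].

Lemma phase1_inv_init : phase1_inv c set0.
Proof.
split=> [v||v]; rewrite ?subrr ?ltxx //.
by rewrite big_set0 big1 // => v _; rewrite subrr.
Qed.

Lemma phase1_inv_decr cap (A : {set F}) f v :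
  f \notin A -> phase1_inv cap A ->
  phase1_inv (decr cap v (lam f)) (f |: A).
Proof.
move=> fA [cap_le sum_used used_big]; have lam_f_gt0 := lam_gt0 f.
have used_decr w :
    used (decr cap v (lam f)) w = used cap w + (w == v)%:R * lam f.
  by rewrite /decr; case: eqP => _; rewrite ?mul1r ?mul0r; lra.
split=> [w||w].
- by rewrite /decr; case: eqP => _; have := cap_le w; lra.
- under eq_bigr do rewrite used_decr.
  rewrite big_split /= sum_used big_setU1 //= addrC (bigD1 v) //= eqxx mul1r.
  by rewrite big1 ?addr0 // => w /negbTE ->; rewrite mul0r.
- rewrite used_decr; case: eqVneq => [->|_]; rewrite ?mul1r ?mul0r ?addr0.
    by move=> _; exists f; rewrite ?setU11 // lerDr; have := cap_le v; lra.
  by move=> /used_big[g gA le_g]; exists g; rewrite ?setU1r.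
Qed.

Lemma phase1_inv_sum_used cap (A : {set F}) (N : {set V}) :
  phase1_inv cap A -> \sum_(v in N) used cap v <= \sum_(g in A) lam g.
Proof.
move=> [cap_le <- _]; apply: ler_sum_subpred => // v _.
by rewrite subr_ge0.
Qed.

Lemma phase1_inv_skip cap (A : {set F}) f v :
  phase1_inv cap A -> (forall g, g \in A -> lam f <= lam g) ->
  cap v < lam f -> lam f <= c v -> c v <= 2 * used cap v.
Proof.
move=> [_ _ used_big] le_A lt_cap le_c.
have [g gA le_g] : exists2 g, g \in A & lam g <= used cap v.
  by apply: used_big; lra.
have := le_A g gA; lra.
Qed.

Lemma phase1_spec s cap A cap' A' :
  phase1 lam Vf U s cap A cap' A' -> phase1_inv cap A ->
  sorted (fun f g => lam g <= lam f) s -> uniq s ->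
  (forall h, h \in s -> h \notin A) ->
  (forall g h, g \in A -> h \in s -> lam h <= lam g) ->
  [/\ phase1_inv cap' A', A \subset A', forall v, cap' v <= cap v &
      forall f, f \in s -> f \notin A' -> forall v, v \in Uf Vf U f ->
        c v <= 2 * used cap' v].
Proof.
elim=> {s cap A cap' A'} [cap A|f s v cap A cap' A' _ le_cap _ IH|
                          f s cap A cap' A' lt_cap _ IH] inv0.
- by move=> *; split.
- move=> sorted_fs /andP[fs uniq_s] disj le_rate.
  have fA : f \notin A by apply: disj; rewrite inE eqxx.
  have le_f h : h \in s -> lam h <= lam f.
    have trans : transitive (fun f g : F => lam g <= lam f).
      by move=> y x z /= h1 h2; apply: le_trans h2 h1.
    by move: h; apply/allP; apply: order_path_min trans sorted_fs.
  have disj' h : h \in s -> h \notin f |: A.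
    move=> hs; rewrite in_setU1 negb_or disj ?inE ?hs ?orbT // andbT.
    by apply: contraNneq fs => <-.
  have le_rate' g h : g \in f |: A -> h \in s -> lam h <= lam g.
    case/setU1P => [-> /le_f //|gA hs].
    by apply: le_rate; rewrite ?inE ?hs ?orbT.
  have [inv' subA' le_cap' skip'] :=
    IH (phase1_inv_decr v fA inv0) (path_sorted sorted_fs) uniq_s disj'
       le_rate'.
  split=> //; first exact: subset_trans (subsetU1 f A) subA'.
  + move=> w; apply: le_trans (le_cap' w) _; rewrite /decr.
    by case: eqP => _ //; have := lam_gt0 f; lra.
  + move=> h; rewrite inE => /predU1P[-> /negP[]|]; last exact: skip'.
    by rewrite (subsetP subA') ?setU11.
- move=> sorted_fs /andP[_ uniq_s] disj le_rate.
  have in_fs h : h \in s -> h \in f :: s by rewrite inE => ->; rewrite orbT.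
  have [inv' subA' le_cap' skip'] := IH inv0 (path_sorted sorted_fs) uniq_s
    (fun h hs => disj h (in_fs h hs))
    (fun g h gA hs => le_rate g h gA (in_fs h hs)).
  split=> // h; rewrite inE => /predU1P[-> _ w w_f|]; last exact: skip'.
  apply: le_trans (phase1_inv_skip inv0 _ (lt_cap w w_f) (lam_le_c f w)) _.
    by move=> g gA; apply: le_rate; rewrite ?inE ?eqxx.
  by have := le_cap' w; lra.
Qed.

End Phase1.

Lemma phase2_subset (R : realFieldType) (V F : finType) (lam : F -> R)
    (Vf : F -> {set V}) (U : {set V}) s cap A A' :
  phase2 lam Vf U s cap A A' -> A \subset A'.
Proof.
elim=> // {s cap A A'} f s x cap A A' _ _ _ _ _ _ subA'.
exact: subset_trans (subsetU1 f A) subA'.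
Qed.

Lemma pi_gca_subset (R : realFieldType) (F : finType) (lam : F -> R)
    (A B : {set F}) :
  (forall f, 0 < lam f) -> A \subset B -> pi_gca lam A <= pi_gca lam B.
Proof.
by move=> lam_gt0 /subsetP subAB; apply: ler_sum_subpred => // f _; apply: ltW.
Qed.

Section Q2.
Variables (R : realFieldType) (V F : finType).
Variables (lam : F -> R) (c : V -> R) (Vf : F -> {set V}) (U : {set V}).
Variable x : F -> V -> R.
Hypothesis x_feasible : q2_feasible lam c U x.

Lemma q2_flow_le f : \sum_(v in Uf Vf U f) x f v <= lam f.
Proof.
case: x_feasible => x_ge0 _ _ x_lam; apply: le_trans (x_lam f).
by apply: ler_sum_subpred => // v; rewrite inE => /andP[].
Qed.

Lemma q2_sum_le_capacity (P : pred F) (N : {set V}) :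
  N \subset U -> (forall f, P f -> Uf Vf U f \subset N) ->
  \sum_(f | P f) \sum_(v in Uf Vf U f) x f v <= \sum_(v in N) c v.
Proof.
case: x_feasible => x_ge0 x_cap _ _ /subsetP subNU subUfN.
apply: le_trans (_ : \sum_f \sum_(v in N) x f v <= _).
  apply: le_trans (_ : \sum_(f | P f) \sum_(v in N) x f v <= _).
    by apply: ler_sum => f /subUfN /subsetP subUf; apply: ler_sum_subpred.
  by apply: ler_sum_subpred => // f _; apply: sumr_ge0.
by rewrite exchange_big /=; apply: ler_sum => v /subNU; apply: x_cap.
Qed.

End Q2.

Theorem lemma5 (R : realFieldType) (V F : finType)
  (lam : F -> R) (c : V -> R) (Vf : F -> {set V}) (U : {set V})
  (hlam : forall f, 0 < lam f) (hc : forall v, 0 < c v)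
  (hmaxmin : forall f v, lam f <= c v)
  (A : {set F}) (hrun : gca_run lam c Vf U A)
  (x : F -> V -> R) (hx : q2_feasible lam c U x) :
  q2_obj Vf U x <= 3 * pi_gca lam A.
Proof.
case: hrun => s [perm_s sorted_s [cap1 [A1 [run1 run2]]]].
have subA1 := phase2_subset run2.
have uniq_s : uniq s by rewrite (perm_uniq perm_s) enum_uniq.
have [inv1 _ _ half_full] := phase1_spec hlam hmaxmin run1
  (phase1_inv_init lam c) sorted_s uniq_s (fun h _ => negbT (in_set0 h))
  (fun g h => ltac:(by rewrite in_set0)).
pose N := [set v | [exists f, (f \notin A) && (v \in Uf Vf U f)]].
have N_half_full v : v \in N -> c v <= 2 * (c v - cap1 v).
  rewrite inE => /existsP[f /andP[fA vf]].
  have fs : f \in s.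
    by rewrite (perm_mem perm_s) mem_enum /FU inE; apply/set0Pn; exists v.
  by apply: half_full fs _ v vf; apply: contra fA => /(subsetP subA1).
have assigned : \sum_(f in A) \sum_(v in Uf Vf U f) x f v <= pi_gca lam A.
  by apply: ler_sum => f _; exact: q2_flow_le hx f.
have unassigned :
    \sum_(f | f \notin A) \sum_(v in Uf Vf U f) x f v <= 2 * pi_gca lam A.
  apply: le_trans (q2_sum_le_capacity hx (N := N) _ _) _.
  - apply/subsetP => v; rewrite inE => /existsP[f /andP[_]].
    by rewrite inE => /andP[].
  - move=> f fA; apply/subsetP => v vf.
    by rewrite inE; apply/existsP; exists f; rewrite fA.
  apply: le_trans (_ : \sum_(v in N) 2 * (c v - cap1 v) <= _).
    exact: ler_sum.
  rewrite -mulr_sumr ler_wpM2l //.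
  exact: le_trans (phase1_inv_sum_used N inv1) (pi_gca_subset hlam subA1).
by rewrite /q2_obj (bigID (mem A)) /=; lra.
Qed.
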